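(* Let $H$ be a bigraph and $S$ a non-trivial strong component of $H^+$. If there is an arc from a vertex of $S$ to a vertex $x\notin S$, then $\{x\}$ is a trivial strong component of $H^+$ and $x$ has out-degree $0$ in $H^+$. If there is an arc from a vertex $x\notin S$ to a vertex of $S$, then $\{x\}$ is a trivial strong component of $H^+$ and $x$ has in-degree $0$ in $H^+$. In particular, $H^+$ has no directed path between two distinct non-trivial strong components.
   Context: A bigraph is a bipartite graph $H$ with fixed bipartition $(B,W)$ (black/white colours). The pair-digraph $H^+$ has vertices all ordered pairs $(u,v)$ of distinct vertices of $H$, and arcs $(u,v)\to(u',v)$ whenever $u,v$ have the same colour, $uu'\in E(H)$, $vu'\notin E(H)$, and $(u,v)\to(u,v')$ whenever $u,v$ have different colours, $vv'\in E(H)$, $uv\notin E(H)$. A strong component is non-trivial if it has more than one vertex, trivial otherwise. *)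

From mathcomp Require Import all_boot.
Set Implicit Arguments. Unset Strict Implicit. Unset Printing Implicit Defensive.

(* A bigraph: finite vertex type V, colouring col (true = black, false = white),
   symmetric edge relation e whose edges join vertices of different colours. *)
Definition bigraph (V : finType) (col : V -> bool) (e : rel V) : Prop :=
  symmetric e /\ (forall x y, e x y -> col x != col y).

Definition pairv (V : finType) := {p : V * V | p.1 != p.2}.

(* Arcs of the pair-digraph H^+. *)
Definition parc (V : finType) (col : V -> bool) (e : rel V) : rel (pairv V) :=
  fun p q =>
    let: (u, v) := val p in
    let: (u', v') := val q in
    if col u == col v then (v' == v) && e u u' && ~~ e v u'
    else (u' == u) && e v v' && ~~ e u v.

Definition sconn (T : finType) (r : rel T) (x y : T) : bool :=
  connect r x y && connect r y x.

Definition is_scomp (T : finType) (r : rel T) (S : {set T}) : Prop :=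
  exists x, S = [set y | sconn r x y].

Definition nontrivial_scomp (T : finType) (r : rel T) (S : {set T}) : Prop :=
  is_scomp r S /\ 1 < #|S|.

Definition trivial_scomp (T : finType) (r : rel T) (x : T) : Prop :=
  is_scomp r [set x].

Definition outdeg0 (T : finType) (r : rel T) (x : T) : Prop := forall y, ~~ r x y.
Definition indeg0 (T : finType) (r : rel T) (x : T) : Prop := forall y, ~~ r y x.

From mathcomp Require Import all_boot.
Set Implicit Arguments. Unset Strict Implicit. Unset Printing Implicit Defensive.

(* Call a vertex (u,v) of H^+ mixed when u and v have different colours.
   Two facts about H^+ drive the proof:
   - arcs alternate: every arc leaves a mixed pair or enters one;
   - two-step return: any walk p -> q -> w of length two starting at a mixed
     pair p can be closed up, i.e. w reaches p again.
   From these two properties alone (for an arbitrary digraph with a marked set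
   of vertices) it follows that an arc a -> b lies on a cycle as soon as a has
   an in-neighbour and b has an out-neighbour.  Since every vertex of a
   non-trivial strong component S has both, an arc leaving S ends at a vertex
   of out-degree 0 and an arc entering S starts at a vertex of in-degree 0;
   such vertices form trivial strong components.  Finally, everything reachable
   from S lies in S or has out-degree 0, so no other non-trivial component is
   reachable from S. *)

Section StrongComponents.
Variables (T : finType) (r : rel T).

Lemma connect_out_neighbour a b : connect r a b -> a != b -> exists z, r a z.
Proof.
move=> /connectP[[|z p] /= walk ->]; first by rewrite eqxx.
by case/andP: walk => raz _ _; exists z.
Qed.

Lemma connect_in_neighbour a b : connect r a b -> a != b -> exists z, r z b.
Proof.
move=> /connectP[p]; case/lastP: p => [|p z] /=; first by move=> _ ->; rewrite eqxx.
by rewrite rcons_path last_rcons => /andP[_ rz] -> _; exists (last a p).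
Qed.

Lemma scomp_eq S y : is_scomp r S -> y \in S -> S = [set z | sconn r y z].
Proof.
move=> [a ->]; rewrite inE => /andP[ay ya]; apply/setP => z; rewrite !inE.
apply/andP/andP => [[az za]|[yz zy]]; split.
- exact: connect_trans ya az.
- exact: connect_trans za ay.
- exact: connect_trans ay yz.
- exact: connect_trans zy ya.
Qed.

Lemma mem_scomp S s x :
  is_scomp r S -> s \in S -> connect r s x -> connect r x s -> x \in S.
Proof. by move=> HS sS sx xs; rewrite (scomp_eq HS sS) inE /sconn sx xs. Qed.

Lemma nontrivial_scomp_other S s : nontrivial_scomp r S -> s \in S ->
  exists2 t, t != s & sconn r s t.
Proof.
move=> [HS S_gt1] sS; move: S_gt1; rewrite (cardsD1 s) sS add1n ltnS card_gt0.
case/set0Pn => t; rewrite !inE => /andP[ts tS]; exists t => //.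
by move: tS; rewrite (scomp_eq HS sS) inE.
Qed.

Lemma nontrivial_scomp_out S s : nontrivial_scomp r S -> s \in S ->
  exists z, r s z.
Proof.
move=> HS sS; have [t ts /andP[st _]] := nontrivial_scomp_other HS sS.
by apply: connect_out_neighbour st _; rewrite eq_sym.
Qed.

Lemma nontrivial_scomp_in S s : nontrivial_scomp r S -> s \in S ->
  exists z, r z s.
Proof.
move=> HS sS; have [t ts /andP[_ tsc]] := nontrivial_scomp_other HS sS.
exact: connect_in_neighbour tsc ts.
Qed.

Lemma outdeg0_trivial x : outdeg0 r x -> trivial_scomp r x.
Proof.
move=> x_sink; exists x; apply/setP => y; rewrite !inE /sconn.
have [->|yx] := eqVneq y x; first by rewrite connect0.
apply/esym/negbTE/negP => /andP[xy _].
have [z xz] : exists z, r x z by apply: connect_out_neighbour xy _; rewrite eq_sym.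
by move: (x_sink z); rewrite xz.
Qed.

Lemma indeg0_trivial x : indeg0 r x -> trivial_scomp r x.
Proof.
move=> x_source; exists x; apply/setP => y; rewrite !inE /sconn.
have [->|yx] := eqVneq y x; first by rewrite connect0.
apply/esym/negbTE/negP => /andP[_ yxc].
have [z zx] := connect_in_neighbour yxc yx.
by move: (x_source z); rewrite zx.
Qed.

End StrongComponents.

Section AlternatingReturn.
Variables (T : finType) (r : rel T) (D : pred T).
Hypothesis arc_touches_D : forall a b, r a b -> D a || D b.
Hypothesis D_return : forall a b c, D a -> r a b -> r b c -> connect r c a.

(* An arc whose tail has an in-neighbour and whose head has an out-neighbour
   lies on a cycle: close the walk through the head if the tail is marked,
   and through the in-neighbour (then marked) otherwise. *)
Lemma arc_on_cycle x a b y : r x a -> r a b -> r b y -> connect r b a.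
Proof.
move=> rxa rab rby; have [Da|nDa] := boolP (D a).
  exact: connect_trans (connect1 rby) (D_return Da rab rby).
have Dx : D x by move: (arc_touches_D rxa); rewrite (negbTE nDa) orbF.
exact: connect_trans (D_return Dx rxa rab) (connect1 rxa).
Qed.

Lemma scomp_exit_outdeg0 S s x : nontrivial_scomp r S -> s \in S -> x \notin S ->
  r s x -> outdeg0 r x.
Proof.
move=> HS sS xS rsx z; apply/negP => rxz; apply: (negP xS).
have [y rys] := nontrivial_scomp_in HS sS.
exact: mem_scomp HS.1 sS (connect1 rsx) (arc_on_cycle rys rsx rxz).
Qed.

Lemma scomp_entry_indeg0 S s x : nontrivial_scomp r S -> s \in S -> x \notin S ->
  r x s -> indeg0 r x.
Proof.
move=> HS sS xS rxs y; apply/negP => ryx; apply: (negP xS).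
have [z rsz] := nontrivial_scomp_out HS sS.
exact: mem_scomp HS.1 sS (arc_on_cycle ryx rxs rsz) (connect1 rxs).
Qed.

Lemma scomp_reach S s y : nontrivial_scomp r S -> s \in S -> connect r s y ->
  y \in S \/ outdeg0 r y.
Proof.
move=> HS sS /connectP[p walk ->] {y}.
elim: p s sS walk => [|z p IHp] s sS /=; first by left.
case/andP => rsz walk; have [zS|zS] := boolP (z \in S); first exact: IHp.
right; have z_sink := scomp_exit_outdeg0 HS sS zS rsz.
case: p walk {IHp} => [|w p] //= /andP[rzw _].
by move: (z_sink w); rewrite rzw.
Qed.

Lemma nontrivial_scomps_unreachable S1 S2 x y :
  nontrivial_scomp r S1 -> nontrivial_scomp r S2 -> S1 != S2 ->
  x \in S1 -> y \in S2 -> ~~ connect r x y.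
Proof.
move=> HS1 HS2 S12 xS1 yS2; apply/negP => xy.
have [yS1|y_sink] := scomp_reach HS1 xS1 xy.
  by move/eqP: S12; apply; rewrite (scomp_eq HS1.1 yS1) (scomp_eq HS2.1 yS2).
have [z ryz] := nontrivial_scomp_out HS2 yS2.
by move: (y_sink z); rewrite ryz.
Qed.

End AlternatingReturn.

Definition mixed (V : finType) (col : V -> bool) (p : pairv V) : bool :=
  col (val p).1 != col (val p).2.

Section PairDigraph.
Variables (V : finType) (col : V -> bool) (e : rel V).
Hypothesis bigraph_H : bigraph col e.

Local Notation "p --> q" := (parc col e p q) (at level 70).

Lemma edge_col a b : e a b -> col b = ~~ col a.
Proof. by move/bigraph_H.2; case: (col a); case: (col b). Qed.

Lemma edgeC a b : e a b = e b a.
Proof. exact: bigraph_H.1. Qed.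

(* Arcs from a non-mixed pair (u,v) replace u by a neighbour u', whose colour
   differs from that of v: the head is mixed. *)
Lemma parc_mixed p q : p --> q -> mixed col p || mixed col q.
Proof.
case: p q => [[u v] huv] [[u' v'] hq]; rewrite /parc /mixed /=.
case: eqP => [cuv|_] //= /andP[/andP[/eqP -> euu'] _] /=.
by rewrite (edge_col euu') cuv; case: (col v).
Qed.

(* Two-step return from a mixed pair (u,v): the walk is
   (u,v) -> (u,d) -> (a,d) with e v d, e u a, ~ e u v, ~ e d a, and it is
   closed by (a,d) -> (a,v) -> (u,v). *)
Lemma parc_mixed_return p q w :
  mixed col p -> p --> q -> q --> w -> connect (parc col e) w p.
Proof.
case: p q w => [[u v] huv] [[u1 d] hq] [[a d1] hw]; rewrite /mixed /parc /=.
move=> cuv; rewrite (negbTE cuv) => /andP[/andP[/eqP eu1 evd] nuv].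
subst u1; have cd : col d = col u.
  by rewrite (edge_col evd); move: cuv; case: (col u); case: (col v).
rewrite cd eqxx => /andP[/andP[/eqP ed1 eua] nda]; subst d1.
have ca : col a = ~~ col u by rewrite (edge_col eua).
have cv : col v = ~~ col u by move: cuv; case: (col u); case: (col v).
have av : a != v by apply: contraNneq nuv => <-.
pose mid : pairv V := exist (fun x : V * V => x.1 != x.2) (a, v) av.
apply: (@connect_trans _ _ mid); apply: connect1; rewrite /parc /=.
  by rewrite ca cd; case: (col u); rewrite /= eqxx edgeC evd edgeC nda.
by rewrite ca cv eqxx /= eqxx edgeC eua edgeC nuv.
Qed.

End PairDigraph.

Theorem corollary2p7 (V : finType) (col : V -> bool) (e : rel V) :
  bigraph col e ->
  let r := parc col e in
  (forall S : {set pairv V}, nontrivial_scomp r S ->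
     (forall s x, s \in S -> x \notin S -> r s x ->
        trivial_scomp r x /\ outdeg0 r x) /\
     (forall s x, s \in S -> x \notin S -> r x s ->
        trivial_scomp r x /\ indeg0 r x)) /\
  (forall S1 S2 : {set pairv V}, nontrivial_scomp r S1 -> nontrivial_scomp r S2 ->
     S1 != S2 -> forall x y, x \in S1 -> y \in S2 -> ~~ connect r x y).
Proof.
move=> bigraph_H r.
have alt := parc_mixed bigraph_H; have ret := parc_mixed_return bigraph_H.
split; last first.
  move=> S1 S2 HS1 HS2 S12 x y.
  exact: (nontrivial_scomps_unreachable alt ret HS1 HS2 S12).
move=> S HS; split=> s x sS xS arc.
  have x_sink := scomp_exit_outdeg0 alt ret HS sS xS arc.
  by split; first exact: outdeg0_trivial.
have x_source := scomp_entry_indeg0 alt ret HS sS xS arc.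
by split; first exact: indeg0_trivial.
Qed.
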